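(* Let $L>0$ be the constant of the quadratic upper bound below and let $0<\alpha\le 2/L$. There exists a constant $\rho_2>0$, independent of $k$, such that for every $k\ge1$ there are $A^{k+1}=\nabla_wH(w^{k+1},z^{k+1})$ and $B^{k+1}\in\partial_zH(w^{k+1},z^{k+1})$ with $$\big\|[A^{k+1};B^{k+1}]\big\|_2\le\rho_2\big\|[w^{k+1};z^{k+1}]-[w^k;z^k]\big\|_2 .$$
   Context: Data: $y\in\mathbb{R}^m$, $X\in\mathbb{R}^{m\times n}$ with rows $x_i^T$, preconditioned so that $X^TX=I_n$. Fix $\delta>0$. $S(x)=\frac{1}{2\sqrt{\delta}}x^2+\frac{\sqrt\delta}{2}$ if $|x|<\sqrt\delta$, $S(x)=|x|$ if $|x|\ge\sqrt\delta$. $H(w,z)=\tfrac12\|y-Xw-z\|_2^2+\delta\sum_{i=1}^m\frac{|z_i|}{S(y_i-x_i^Tw)}$, with $\nabla_w H(w,z)=-X^T(y-Xw-z)+\delta X^Tv$, $v_i=\frac{|z_i|S'(y_i-x_i^Tw)}{S(y_i-x_i^Tw)^2}$. $T(x)=0$ if $|x|\le\sqrt\delta$, $T(x)=x-\delta/x$ if $|x|>\sqrt\delta$, componentwise. SARM iteration: $w^0=0$, $z^0=0$, $w^{k+1}=w^k-\alpha\nabla_wH(w^k,z^k)$, $z^{k+1}=T(y-Xw^{k+1})$. $L>0$ is a constant depending only on $\delta$ such that for all $w,w'$ and all $z$ with $|z_i|\le S(y_i-x_i^Tw)$: $H(w',z)\le H(w,z)+\nabla_wH(w,z)^T(w'-w)+\frac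 L2\|w'-w\|_2^2$. For a proper lsc $\sigma:\mathbb{R}^d\to(-\infty,\infty]$, the Fréchet subdifferential $\hat\partial\sigma(b)$ is the set of $u$ with $\liminf_{a\to b,a\ne b}\frac{\sigma(a)-\sigma(b)-\langle u,a-b\rangle}{\|a-b\|}\ge0$, and the limiting subdifferential is $\partial\sigma(x)=\{u:\exists x_k\to x,\ \sigma(x_k)\to\sigma(x),\ u_k\in\hat\partial\sigma(x_k),\ u_k\to u\}$. $\partial_zH(w,z)$ is the limiting subdifferential of $z\mapsto H(w,z)$. *)

From HB Require Import structures.
From mathcomp Require Import all_boot all_order all_algebra.
From mathcomp Require Import all_classical all_reals all_analysis.
Set Implicit Arguments.
Unset Strict Implicit.
Unset Printing Implicit Defensive.
Import Order.TTheory GRing.Theory Num.Theory.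
Import numFieldNormedType.Exports.
Local Open Scope classical_set_scope.
Local Open Scope ring_scope.

Section SARM.
Variable R : realType.

Definition dotv (k : nat) (u v : 'cV[R]_k) : R := \sum_(i < k) u i 0 * v i 0.
Definition norm2 (k : nat) (v : 'cV[R]_k) : R := Num.sqrt (dotv v v).

Definition Sfun (delta x : R) : R :=
  if `|x| < Num.sqrt delta then x ^+ 2 / (2 * Num.sqrt delta) + Num.sqrt delta / 2
  else `|x|.
Definition Sder (delta x : R) : R :=
  if `|x| < Num.sqrt delta then x / Num.sqrt delta else Num.sg x.

Definition Tfun (delta x : R) : R :=
  if `|x| <= Num.sqrt delta then 0 else x - delta / x.
Definition Tvec (delta : R) (k : nat) (v : 'cV[R]_k) : 'cV[R]_k :=
  \col_i Tfun delta (v i 0).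

Variables (m n : nat).

Definition resid (y : 'cV[R]_m) (X : 'M[R]_(m, n)) (w : 'cV[R]_n) : 'cV[R]_m :=
  y - X *m w.

Definition Hfun (delta : R) (y : 'cV[R]_m) (X : 'M[R]_(m, n))
    (w : 'cV[R]_n) (z : 'cV[R]_m) : R :=
  (norm2 (y - X *m w - z)) ^+ 2 / 2
  + delta * \sum_(i < m) `|z i 0| / Sfun delta (resid y X w i 0).

Definition gradwH (delta : R) (y : 'cV[R]_m) (X : 'M[R]_(m, n))
    (w : 'cV[R]_n) (z : 'cV[R]_m) : 'cV[R]_n :=
  let r := resid y X w in
  let v := \col_i (`|z i 0| * Sder delta (r i 0) / (Sfun delta (r i 0)) ^+ 2) in
  - (X^T *m (y - X *m w - z)) + delta *: (X^T *m v).

Fixpoint sarm (delta alpha : R) (y : 'cV[R]_m) (X : 'M[R]_(m, n)) (k : nat)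
    : 'cV[R]_n * 'cV[R]_m :=
  match k with
  | 0%N => (0, 0)
  | k'.+1 =>
      let wz := sarm delta alpha y X k' in
      let w' := wz.1 - alpha *: gradwH delta y X wz.1 wz.2 in
      (w', Tvec delta (y - X *m w'))
  end.

End SARM.

(* Frechet subdifferential: u such that
   liminf_{a -> b, a <> b} (s a - s b - <u, a - b>) / ||a - b|| >= 0,
   with the liminf >= 0 written out in epsilon-eta form. *)
Definition frechet_subdiff (R : realType) (d : nat) (s : 'cV[R]_d -> R)
    (b u : 'cV[R]_d) : Prop :=
  forall eps : R, 0 < eps -> exists eta : R, 0 < eta /\
    forall a : 'cV[R]_d, 0 < norm2 (a - b) -> norm2 (a - b) < eta ->
      - eps <= (s a - s b - dotv u (a - b)) / norm2 (a - b).

Definition limiting_subdiff (R : realType) (d : nat) (s : 'cV[R]_d -> R)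
    (x u : 'cV[R]_d) : Prop :=
  exists (xs us : nat -> 'cV[R]_d),
    xs @ \oo --> x /\ (fun k => s (xs k)) @ \oo --> s x /\
    (forall k, frechet_subdiff s (xs k) (us k)) /\ us @ \oo --> u.

From HB Require Import structures.
From mathcomp Require Import all_boot all_order all_algebra.
From mathcomp Require Import all_classical all_reals all_analysis.
From mathcomp Require Import ring lra.
Import Order.TTheory GRing.Theory Num.Theory.
Import numFieldNormedType.Exports.
Set Implicit Arguments.
Unset Strict Implicit.
Local Open Scope ring_scope.

(* For k >= 1 the iterate z^{k+1} = T(y - X w^{k+1}) minimizes z |-> H(w^{k+1}, z):
   H separates over the coordinates of z, and T is the soft thresholding that solves
   each scalar problem min_a (x - a)^2/2 + (delta / S x) |a|.  Hence B = 0 is a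
   limiting subgradient.  At z = T(r), grad_w H(w, z) = X^T psi(y - X w) with
   psi x = -x on |x| <= sqrt delta and psi x = -delta^2/x^3 outside, a 3-Lipschitz
   function.  The gradient step reads X^T psi(r^k) = (w^k - w^{k+1}) / alpha and
   r^{k+1} - r^k = X (w^k - w^{k+1}) with X an isometry, so
   |A^{k+1}|^2 <= (18 + 2 / alpha^2) |w^{k+1} - w^k|^2. *)

Section GradientProfile.
Variable R : realType.
Implicit Types s p q x a b : R.

Lemma exprD_le_mul s p q i j : 0 <= s -> s <= p -> s <= q ->
  s ^+ (i + j) <= p ^+ i * q ^+ j.
Proof.
move=> s0 sp sq; rewrite exprD.
have p0 : 0 <= p by exact: le_trans sp.
have q0 : 0 <= q by exact: le_trans sq.
by apply: ler_pM; rewrite ?exprn_ge0 // lerXn2r // nnegrE.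
Qed.

Lemma expr4_mul_sqr_le s p q : 0 <= s -> s <= p -> s <= q ->
  s ^+ 4 * (p ^+ 2 + p * q + q ^+ 2) <= 3 * (p ^+ 3 * q ^+ 3).
Proof.
move=> s0 sp sq.
have p0 : 0 <= p by exact: le_trans sp.
have q0 : 0 <= q by exact: le_trans sq.
have e1 := ler_wpM2r (exprn_ge0 2 p0) (exprD_le_mul 1 3 s0 sp sq).
have e2 := ler_wpM2r (mulr_ge0 p0 q0) (exprD_le_mul 2 2 s0 sp sq).
have e3 := ler_wpM2r (exprn_ge0 2 q0) (exprD_le_mul 3 1 s0 sp sq).
have -> : 3 * (p ^+ 3 * q ^+ 3) =
  p ^+ 1 * q ^+ 3 * p ^+ 2 + p ^+ 2 * q ^+ 2 * (p * q) + p ^+ 3 * q ^+ 1 * q ^+ 2.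
  by ring.
rewrite !mulrDr; lra.
Qed.

Lemma inv_cube_lipschitz s a b : 0 < s -> s <= `|a| -> s <= `|b| ->
  `|s ^+ 4 / a ^+ 3 - s ^+ 4 / b ^+ 3| <= 3 * `|a - b|.
Proof.
move=> s0 sa sb.
have a0 : a != 0 by rewrite -normr_gt0; lra.
have b0 : b != 0 by rewrite -normr_gt0; lra.
have -> : s ^+ 4 / a ^+ 3 - s ^+ 4 / b ^+ 3 =
    (s ^+ 4 * (a ^+ 2 + a * b + b ^+ 2)) / (a ^+ 3 * b ^+ 3) * (b - a).
  by field; rewrite a0 b0.
rewrite normrM (distrC b a); apply: ler_wpM2r => //.
rewrite normrM normfV (normrM (s ^+ 4)) (normrM (a ^+ 3)) !normrX.
rewrite (gtr0_norm s0) ler_pdivrMr; last first.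
  by rewrite mulr_gt0 // exprn_gt0 // normr_gt0.
have hs : 0 <= s ^+ 4 by rewrite exprn_ge0 ?ltW.
apply: le_trans (ler_wpM2l hs (_ : _ <= `|a| ^+ 2 + `|a| * `|b| + `|b| ^+ 2)) _.
  by rewrite -!normrX -normrM !(le_trans (ler_normD _ _)) ?lerD2r ?ler_normD.
exact: expr4_mul_sqr_le (ltW s0) sa sb.
Qed.

(* With [s = sqrt delta], [gradwH delta y X w (Tvec delta r)] is [X^T] applied to
   this function of [r = y - X w], componentwise (lemma [gradwH_Tvec]). *)
Definition grad_profile s x := if `|x| <= s then - x else - (s ^+ 4 / x ^+ 3).

Lemma grad_profileN s x : grad_profile s (- x) = - grad_profile s x.
Proof.
rewrite /grad_profile normrN; case: ifP => _ //.
by rewrite (exprS (- x)) sqrrN mulNr invrN mulrN -exprS.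
Qed.

Lemma grad_profile_mixed_lipschitz s a b : 0 < s -> `|a| <= s -> s < `|b| ->
  `|grad_profile s a - grad_profile s b| <= 3 * `|a - b|.
Proof.
move=> s0 sa sb; wlog b0 : a b sa sb / 0 < b.
  move=> hwlog; case: (ltrP 0 b) => [|bn]; first exact: hwlog.
  have bn0 : b != 0 by rewrite -normr_gt0; lra.
  have := hwlog (- a) (- b); rewrite !grad_profileN -!opprD !normrN.
  by apply=> //; rewrite oppr_gt0 lt_neqAle bn0.
rewrite gtr0_norm // in sb.
have pa : grad_profile s a = - a by rewrite /grad_profile sa.
have pb : grad_profile s b = - (s ^+ 4 / b ^+ 3).
  by rewrite /grad_profile (gtr0_norm b0) leNgt sb.
have ps : grad_profile s s = - s by rewrite /grad_profile (gtr0_norm s0) lexx.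
have h : `|s ^+ 4 / b ^+ 3 - s| <= 3 * (b - s).
  have s3 : s ^+ 4 / s ^+ 3 = s by rewrite (exprS _ 3) mulfK // expf_neq0 // gt_eqF.
  have := @inv_cube_lipschitz s b s s0.
  rewrite s3 (gtr0_norm s0) (gtr0_norm b0) (gtr0_norm (_ : 0 < b - s)) ?subr_gt0 //.
  by apply=> //; apply: ltW.
(* [s] lies between [a] and [b]; split the difference there. *)
apply: le_trans (ler_distD (grad_profile s s) _ _) _.
rewrite pa pb ps !opprK [- s + _]addrC.
move: sa; rewrite ler_norml => /andP [sa1 sa2].
rewrite (ger0_norm (_ : 0 <= - a + s)) ?(ltr0_norm (_ : a - b < 0)); lra.
Qed.

Lemma grad_profile_lipschitz s a b : 0 < s ->
  `|grad_profile s a - grad_profile s b| <= 3 * `|a - b|.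
Proof.
move=> s0; case: (lerP `|a| s) => ha; case: (lerP `|b| s) => hb.
- rewrite /grad_profile ha hb -opprD normrN ler_peMl ?normr_ge0 //; lra.
- exact: grad_profile_mixed_lipschitz.
- by rewrite distrC (distrC a); apply: grad_profile_mixed_lipschitz.
- rewrite /grad_profile (lt_geF ha) (lt_geF hb) -opprD normrN.
  by apply: inv_cube_lipschitz; rewrite // ltW.
Qed.

Lemma grad_profile_sqr_lipschitz s a b : 0 < s ->
  (grad_profile s a - grad_profile s b) ^+ 2 <= 9 * (a - b) ^+ 2.
Proof.
move=> s0; have h := grad_profile_lipschitz a b s0.
rewrite -(real_normK (num_real (a - b))) -real_normK ?num_real //.
have -> : 9 * `|a - b| ^+ 2 = (3 * `|a - b|) ^+ 2 by ring.
by rewrite lerXn2r // nnegrE.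
Qed.

End GradientProfile.

Section Thresholding.
Variable R : realType.
Implicit Types s delta x a c : R.

Lemma Sfun_gt0 delta x : 0 < delta -> 0 < Sfun delta x.
Proof.
move=> d0; have s0 : 0 < Num.sqrt delta by rewrite sqrtr_gt0.
rewrite /Sfun; case: ifP => [_ | /negbT]; last by rewrite -leNgt; apply: lt_le_trans.
by apply: ltr_wpDl; rewrite ?divr_gt0 // divr_ge0 ?sqr_ge0 // mulr_ge0 // ltW.
Qed.

Lemma normr_mul_Sfun_le delta x : 0 < delta -> `|x| <= Num.sqrt delta ->
  `|x| * Sfun delta x <= delta.
Proof.
move=> d0; have s0 : 0 < Num.sqrt delta by rewrite sqrtr_gt0.
rewrite /Sfun; move: (sqr_sqrtr (ltW d0)); move: (Num.sqrt delta) s0 => s s0 <- hx.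
case: ifP => _; last by rewrite -expr2 lerXn2r // nnegrE ltW.
rewrite -real_normK ?num_real //; move: (normr_ge0 x) hx; move: `|x| => t t0 ts.
have -> : t * (t ^+ 2 / (2 * s) + s / 2) = (t ^+ 3 + t * s ^+ 2) / (2 * s).
  by field; rewrite gt_eqF.
rewrite ler_pdivrMr ?mulr_gt0 //.
have t3 : t ^+ 3 <= s ^+ 3 by rewrite lerXn2r // nnegrE ltW.
nra.
Qed.

Lemma abs_prox_zero c x a : `|x| <= c ->
  x ^+ 2 / 2 <= (x - a) ^+ 2 / 2 + c * `|a|.
Proof.
move=> xc.
have xa : x * a <= c * `|a|.
  by apply: le_trans (ler_wpM2r (normr_ge0 a) xc); rewrite -normrM ler_norm.
nra.
Qed.

Lemma abs_prox_shrink c x a : 0 <= c ->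
  c ^+ 2 / 2 + c * (`|x| - c) <= (x - a) ^+ 2 / 2 + c * `|a|.
Proof.
move=> c0; case: (lerP 0 x) => x0.
- have ca : c * a <= c * `|a| by rewrite ler_wpM2l // ler_norm.
  have := sqr_ge0 (a - x + c); rewrite ger0_norm //; nra.
- have ca : c * - a <= c * `|a| by rewrite ler_wpM2l // -normrN ler_norm.
  have := sqr_ge0 (a - x - c); rewrite ltr0_norm //; nra.
Qed.

Lemma normr_sub_sqr_div s x : 0 < s -> s < `|x| ->
  `|x - s ^+ 2 / x| = `|x| - s ^+ 2 / `|x|.
Proof.
move=> s0 sx; have x0 : x != 0 by rewrite -normr_gt0; apply: lt_trans sx.
have -> : x - s ^+ 2 / x = (x ^+ 2 - s ^+ 2) / x by field.
rewrite normrM normfV -real_normK ?num_real // ger0_norm; last first.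
  by rewrite subr_ge0 lerXn2r // ?nnegrE ltW.
by field; rewrite normr_eq0.
Qed.

Lemma Tfun_argmin delta x a : 0 < delta ->
  (x - Tfun delta x) ^+ 2 / 2 + delta * (`|Tfun delta x| / Sfun delta x)
  <= (x - a) ^+ 2 / 2 + delta * (`|a| / Sfun delta x).
Proof.
move=> d0; have S0 := Sfun_gt0 x d0.
rewrite !mulrA (mulrAC delta `|Tfun delta x|) (mulrAC delta `|a|).
have [xs | sx] := lerP `|x| (Num.sqrt delta).
  rewrite /Tfun xs subr0 normr0 mulr0 addr0; apply: abs_prox_zero.
  by rewrite ler_pdivlMr // normr_mul_Sfun_le.
have -> : Sfun delta x = `|x| by rewrite /Sfun ltNge (ltW sx).
rewrite /Tfun (lt_geF sx); move: (sqr_sqrtr (ltW d0)) sx.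
move: (Num.sqrt delta) (sqrtr_gt0 delta) => s; rewrite d0 => s0 <- sx.
rewrite normr_sub_sqr_div // (_ : x - (x - s ^+ 2 / x) = s ^+ 2 / x); last by ring.
have -> : (s ^+ 2 / x) ^+ 2 = (s ^+ 2 / `|x|) ^+ 2.
  by rewrite !expr_div_n -(real_normK (num_real x)).
by apply: abs_prox_shrink; rewrite divr_ge0 ?sqr_ge0.
Qed.

Lemma gradwH_component_Tfun delta x : 0 < delta ->
  - (x - Tfun delta x) + delta * (`|Tfun delta x| * Sder delta x / Sfun delta x ^+ 2)
  = grad_profile (Num.sqrt delta) x.
Proof.
move=> d0; rewrite /Tfun /Sder /Sfun /grad_profile; move: (sqr_sqrtr (ltW d0)).
move: (Num.sqrt delta) (sqrtr_gt0 delta) => s; rewrite d0 => s0 <-.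
have [_ | sx] := lerP `|x| s; first by rewrite subr0 normr0 !mul0r mulr0 addr0.
rewrite ltNge (ltW sx) /= normr_sub_sqr_div //.
have x0 : x != 0 by rewrite -normr_gt0 (lt_trans s0).
have [xp | xn] := ltrP 0 x; first by rewrite gtr0_sg // gtr0_norm //; field.
have xn' : x < 0 by rewrite lt_neqAle x0.
by rewrite ltr0_sg // ltr0_norm //; field.
Qed.

End Thresholding.

Section EuclideanNorm.
Variable R : realType.

Lemma dotvE k (u v : 'cV[R]_k) : dotv u v = (u^T *m v) 0 0.
Proof. by rewrite /dotv !mxE; apply: eq_bigr => i _; rewrite mxE. Qed.

Lemma dotvv_ge0 k (v : 'cV[R]_k) : 0 <= dotv v v.
Proof. by apply: sumr_ge0 => i _; rewrite -expr2 sqr_ge0. Qed.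

Lemma dotv0l k (v : 'cV[R]_k) : dotv 0 v = 0.
Proof. by rewrite /dotv big1 // => i _; rewrite mxE mul0r. Qed.

Lemma dotvNN k (u v : 'cV[R]_k) : dotv (- u) (- v) = dotv u v.
Proof. by apply: eq_bigr => i _; rewrite !mxE mulrNN. Qed.

Lemma dotvZZ k (c : R) (v : 'cV[R]_k) : dotv (c *: v) (c *: v) = c ^+ 2 * dotv v v.
Proof. by rewrite /dotv mulr_sumr; apply: eq_bigr => i _; rewrite !mxE; ring. Qed.

Lemma dotv_col_mx p q (a : 'cV[R]_p) (b : 'cV[R]_q) :
  dotv (col_mx a b) (col_mx a b) = dotv a a + dotv b b.
Proof.
rewrite /dotv big_split_ord /=.
by congr (_ + _); apply: eq_bigr => i _; rewrite ?col_mxEu ?col_mxEd.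
Qed.

Lemma dotvDD_le k (a b : 'cV[R]_k) :
  dotv (a + b) (a + b) <= 2 * dotv a a + 2 * dotv b b.
Proof.
rewrite /dotv !mulr_sumr -big_split /=; apply: ler_sum => i _; rewrite !mxE.
have := sqr_ge0 (a i 0 - b i 0); nra.
Qed.

Lemma dotv_mulmx_isometry m n (X : 'M[R]_(m, n)) (v : 'cV[R]_n) :
  X^T *m X = 1%:M -> dotv (X *m v) (X *m v) = dotv v v.
Proof. by move=> hX; rewrite !dotvE trmx_mul -!mulmxA (mulmxA X^T) hX mul1mx. Qed.

(* Pythagoras for the orthogonal splitting u = X X^T u + (u - X X^T u). *)
Lemma dotv_trmx_mulmx_le m n (X : 'M[R]_(m, n)) (u : 'cV[R]_m) :
  X^T *m X = 1%:M -> dotv (X^T *m u) (X^T *m u) <= dotv u u.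
Proof.
move=> hX; set e := u - X *m (X^T *m u).
have u_split : u^T *m u = (X^T *m u)^T *m (X^T *m u) + e^T *m e.
  rewrite /e [(u - _)^T]linearB /= !trmx_mul !trmxK mulmxBl !mulmxBr !mulmxA.
  by rewrite -(mulmxA (u^T *m X) X^T X) hX mulmx1 subrr subr0 addrC subrK.
by rewrite !dotvE u_split [X in _ <= X]mxE lerDl -dotvE dotvv_ge0.
Qed.

Lemma norm2_col_mx0_le k l p q (C : R) (a : 'cV[R]_k) (b : 'cV[R]_l) (c : 'cV[R]_q) :
  0 <= C -> dotv a a <= C * dotv b b ->
  norm2 (col_mx a (0 : 'cV[R]_p)) <= Num.sqrt C * norm2 (col_mx b c).
Proof.
move=> C0 hab; rewrite /norm2 -sqrtrM // ler_sqrt ?mulr_ge0 ?dotvv_ge0 //.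
rewrite !dotv_col_mx dotv0l addr0 (le_trans hab) // ler_wpM2l // lerDl.
exact: dotvv_ge0.
Qed.

End EuclideanNorm.

Lemma limiting_subdiff_min0 (R : realType) d (f : 'cV[R]_d -> R) (b : 'cV[R]_d) :
  (forall a, f b <= f a) -> limiting_subdiff f b 0.
Proof.
move=> fmin; exists (fun=> b), (fun=> 0).
split; first apply: cvg_cst.
split; first apply: cvg_cst.
split; last apply: cvg_cst.
move=> _ eps eps0; exists 1; split=> // a ab0 _.
rewrite dotv0l subr0 (le_trans _ (divr_ge0 (_ : 0 <= f a - f b) (ltW ab0))) //.
  by rewrite oppr_le0 ltW.
by rewrite subr_ge0.
Qed.

Section SARMStep.
Variables (R : realType) (m n : nat) (delta : R) (y : 'cV[R]_m) (X : 'M[R]_(m, n)).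
Hypothesis delta_gt0 : 0 < delta.

Definition grad_profile_col k (r : 'cV[R]_k) : 'cV[R]_k :=
  \col_i grad_profile (Num.sqrt delta) (r i 0).

Lemma grad_profile_col_lipschitz k (r r' : 'cV[R]_k) :
  dotv (grad_profile_col r - grad_profile_col r') (grad_profile_col r - grad_profile_col r')
  <= 9 * dotv (r - r') (r - r').
Proof.
rewrite /dotv mulr_sumr; apply: ler_sum => i _; rewrite !mxE -!expr2.
by apply: grad_profile_sqr_lipschitz; rewrite sqrtr_gt0.
Qed.

Lemma Hfun_Tvec_min (w : 'cV[R]_n) (a : 'cV[R]_m) :
  Hfun delta y X w (Tvec delta (y - X *m w)) <= Hfun delta y X w a.
Proof.
rewrite /Hfun /resid /norm2 !sqr_sqrtr ?dotvv_ge0 // /dotv.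
rewrite !mulr_suml !mulr_sumr -!big_split /=; apply: ler_sum => i _.
by rewrite !mxE -!expr2; apply: Tfun_argmin.
Qed.

Lemma gradwH_Tvec (w : 'cV[R]_n) :
  gradwH delta y X w (Tvec delta (y - X *m w)) = X^T *m grad_profile_col (y - X *m w).
Proof.
rewrite /gradwH /resid -mulmxN scalemxAr -mulmxDr; congr (X^T *m _).
by apply/matrixP => i j; rewrite !mxE (ord1 j) gradwH_component_Tfun.
Qed.

Lemma gradwH_Tvec_step_le (alpha : R) (w0 w1 : 'cV[R]_n) :
  X^T *m X = 1%:M -> 0 < alpha ->
  w1 = w0 - alpha *: gradwH delta y X w0 (Tvec delta (y - X *m w0)) ->
  dotv (gradwH delta y X w1 (Tvec delta (y - X *m w1)))
       (gradwH delta y X w1 (Tvec delta (y - X *m w1)))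
  <= (18 + 2 * alpha^-1 ^+ 2) * dotv (w1 - w0) (w1 - w0).
Proof.
move=> hX a0; rewrite !gradwH_Tvec => ->.
set r0 := y - X *m w0; set G0 := X^T *m grad_profile_col r0.
set r1 := y - X *m (w0 - alpha *: G0).
have dr : r1 - r0 = X *m (alpha *: G0).
  by rewrite /r1 /r0 mulmxBr (opprB y) addrC subrKA subKr.
have -> : X^T *m grad_profile_col r1 = X^T *m (grad_profile_col r1 - grad_profile_col r0) + G0.
  by rewrite mulmxBr subrK.
have -> : w0 - alpha *: G0 - w0 = - (alpha *: G0) by rewrite addrC addKr.
apply: le_trans (dotvDD_le _ _) _.
have hP := le_trans (dotv_trmx_mulmx_le _ hX) (grad_profile_col_lipschitz r1 r0).
rewrite dr (dotv_mulmx_isometry _ hX) dotvZZ in hP.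
rewrite dotvNN dotvZZ.
have -> : (18 + 2 * alpha^-1 ^+ 2) * (alpha ^+ 2 * dotv G0 G0) =
    18 * (alpha ^+ 2 * dotv G0 G0) + 2 * dotv G0 G0.
  by field; rewrite gt_eqF.
lra.
Qed.

End SARMStep.

Section SARMIterates.
Variables (R : realType) (m n : nat) (delta alpha : R).
Variables (y : 'cV[R]_m) (X : 'M[R]_(m, n)).

Lemma sarmS_fst k : (sarm delta alpha y X k.+1).1 =
  (sarm delta alpha y X k).1
  - alpha *: gradwH delta y X (sarm delta alpha y X k).1 (sarm delta alpha y X k).2.
Proof. by []. Qed.

Lemma sarmS_snd k : (sarm delta alpha y X k.+1).2 =
  Tvec delta (y - X *m (sarm delta alpha y X k.+1).1).
Proof. by []. Qed.

End SARMIterates.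

Theorem theorem2 (R : realType) (m n : nat) (y : 'cV[R]_m) (X : 'M[R]_(m, n))
    (delta L alpha : R) :
  X^T *m X = 1%:M ->
  0 < delta ->
  0 < L ->
  (forall (w w' : 'cV[R]_n) (z : 'cV[R]_m),
     (forall i : 'I_m, `|z i 0| <= Sfun delta (resid y X w i 0)) ->
     Hfun delta y X w' z <=
       Hfun delta y X w z + dotv (gradwH delta y X w z) (w' - w)
       + L / 2 * (norm2 (w' - w)) ^+ 2) ->
  0 < alpha -> alpha <= 2 / L ->
  exists rho2 : R, 0 < rho2 /\
    forall k : nat, (1 <= k)%N ->
      let wk := (sarm delta alpha y X k).1 in
      let zk := (sarm delta alpha y X k).2 in
      let wk1 := (sarm delta alpha y X k.+1).1 in
      let zk1 := (sarm delta alpha y X k.+1).2 in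
      exists (A : 'cV[R]_n) (B : 'cV[R]_m),
        A = gradwH delta y X wk1 zk1 /\
        limiting_subdiff (fun z => Hfun delta y X wk1 z) zk1 B /\
        norm2 (col_mx A B) <= rho2 * norm2 (col_mx wk1 zk1 - col_mx wk zk).
Proof.
move=> hX d0 _ _ a0 _.
have C0 : 0 < 18 + 2 * alpha^-1 ^+ 2 by have := sqr_ge0 alpha^-1; lra.
exists (Num.sqrt (18 + 2 * alpha^-1 ^+ 2)); split; first by rewrite sqrtr_gt0.
case=> // k _ wk zk wk1 zk1.
exists (gradwH delta y X wk1 zk1), 0; split=> //; split.
  by apply: limiting_subdiff_min0 => a; rewrite /zk1 sarmS_snd; apply: Hfun_Tvec_min.
rewrite opp_col_mx add_col_mx; apply: norm2_col_mx0_le; first exact: ltW C0.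
rewrite /zk1 sarmS_snd; apply: (gradwH_Tvec_step_le d0 hX a0).
by rewrite /zk -sarmS_snd.
Qed.
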